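(* Let $(X,S)$ be an $S$-metric space, $r\ge0$, and let $\{\xi_n\}$, $\{\eta_n\}$ be sequences in $X$ such that $S(\xi_n,\xi_n,\eta_n)\to0$ as $n\to\infty$. Then $\{\xi_n\}$ is $r$-statistically convergent to $\xi$ if and only if $\{\eta_n\}$ is $r$-statistically convergent to $\xi$.
   Context: An $S$-metric on a nonempty set $X$ is a function $S:X^3\to[0,\infty)$ such that for all $x,y,z,a\in X$: $S(x,y,z)=0$ if and only if $x=y=z$, and $S(x,y,z)\le S(x,x,a)+S(y,y,a)+S(z,z,a)$. For $B\subset\mathbb N$ the natural density is $\delta(B)=\lim_{n\to\infty}\frac{|\{k\in B:k\le n\}|}{n}$ when the limit exists. For $r\ge0$, $\{\xi_n\}$ is $r$-statistically convergent to $\xi$ if for every $\varepsilon>0$, $\delta(\{n\in\mathbb N: S(\xi_n,\xi_n,\xi)\ge r+\varepsilon\})=0$. *)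

From Stdlib Require Import Reals Lra ClassicalEpsilon.
Open Scope R_scope.

Definition is_Smetric {X : Type} (S : X -> X -> X -> R) : Prop :=
  (forall x y z, 0 <= S x y z) /\
  (forall x y z, S x y z = 0 <-> (x = y /\ y = z)) /\
  (forall x y z a, S x y z <= S x x a + S y y a + S z z a).

Definition ind (B : nat -> Prop) (k : nat) : R :=
  if excluded_middle_informative (B k) then 1 else 0.

Fixpoint count_upto (B : nat -> Prop) (n : nat) : R :=
  match n with
  | O => 0
  | S m => count_upto B m + ind B (S m)
  end.

Definition has_density (B : nat -> Prop) (d : R) : Prop :=
  Un_cv (fun n => count_upto B n / INR n) d.

(** r-statistical convergence of xi to x (sequence indexed by n >= 1; xi 0 unused) *)
Definition r_stat_conv {X : Type} (S : X -> X -> X -> R) (r : R)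
  (xi : nat -> X) (x : X) : Prop :=
  forall eps : R, 0 < eps ->
    has_density (fun n => r + eps <= S (xi n) (xi n) x) 0.

(** The S-metric inequality gives the "triangle inequality"
    [S(η,η,x) <= 2 S(ξ,ξ,η) + S(ξ,ξ,x)], so once [S(ξ_n,ξ_n,η_n) < ε/4] every
    index with [S(η_n,η_n,x) >= r + ε] also has [S(ξ_n,ξ_n,x) >= r + ε/2].
    Up to finitely many indices the exceptional set of [η] for [ε] is thus
    contained in that of [ξ] for [ε/2], and density zero survives such an
    inclusion.  As [S(ξ,ξ,η) = S(η,η,ξ)], the argument is symmetric in [ξ]
    and [η]. *)

From Pilot Require Import Defs.
From Stdlib Require Import Reals Lra Lia ClassicalEpsilon.
Open Scope R_scope.

Lemma Smetric_sym {X : Type} (S : X -> X -> X -> R) :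
  is_Smetric S -> forall x y, S x x y = S y y x.
Proof.
  intros [_ [S_eq0 S_rect]].
  assert (S_le : forall x y, S x x y <= S y y x).
  { intros x y.
    pose proof (S_rect x x y x) as H.
    rewrite (proj2 (S_eq0 x x x) (conj eq_refl eq_refl)) in H; lra. }
  intros x y; pose proof (S_le x y); pose proof (S_le y x); lra.
Qed.

Lemma Smetric_triangle {X : Type} (S : X -> X -> X -> R) :
  is_Smetric S -> forall x y z, S x x z <= 2 * S x x y + S y y z.
Proof.
  intros HS x y z.
  pose proof (proj2 (proj2 HS) x x z y) as H.
  rewrite (Smetric_sym S HS z y) in H; lra.
Qed.

Lemma ind_bounds (B : nat -> Prop) (k : nat) : 0 <= Defs.ind B k <= 1.
Proof. unfold Defs.ind; destruct excluded_middle_informative; lra. Qed.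

Lemma ind_le (A B : nat -> Prop) (k : nat) : (A k -> B k) -> Defs.ind A k <= Defs.ind B k.
Proof.
  intros AB; unfold Defs.ind.
  destruct (excluded_middle_informative (A k)) as [a|];
    destruct (excluded_middle_informative (B k)) as [|nb]; try lra.
  exfalso; exact (nb (AB a)).
Qed.

Lemma count_upto_nonneg (B : nat -> Prop) (n : nat) : 0 <= count_upto B n.
Proof. induction n; simpl; [lra|]. pose proof (ind_bounds B (S n)); lra. Qed.

Lemma count_upto_le_eventually (A B : nat -> Prop) (N : nat) :
  (forall k, (N < k)%nat -> A k -> B k) ->
  forall n, count_upto A n <= count_upto B n + INR (Nat.min n N).
Proof.
  intros AB n; induction n as [|n IHn]; simpl count_upto; [simpl; lra|].
  pose proof (ind_bounds A (S n)); pose proof (ind_bounds B (S n)).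
  destruct (Nat.le_gt_cases (S n) N).
  - replace (Nat.min (S n) N) with (S (Nat.min n N)) by lia.
    rewrite S_INR; lra.
  - replace (Nat.min (S n) N) with (Nat.min n N) by lia.
    pose proof (ind_le A B (S n) (AB (S n) ltac:(lia))); lra.
Qed.

Lemma Un_cv_squeeze_0 (u v : nat -> R) :
  (forall n, 0 <= u n <= v n) -> Un_cv v 0 -> Un_cv u 0.
Proof.
  intros uv Hv eps Heps.
  destruct (Hv eps Heps) as [N HN]; exists N; intros n Hn.
  specialize (HN n Hn); specialize (uv n); unfold R_dist in *.
  rewrite Rminus_0_r in *; rewrite Rabs_pos_eq in * by lra; lra.
Qed.

Lemma Un_cv_const_div_INR (c : R) : Un_cv (fun n => c / INR n) 0.
Proof.
  assert (Hconst : Un_cv (fun _ => c) c).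
  { intros eps Heps; exists O; intros n _; unfold R_dist.
    rewrite Rminus_diag, Rabs_R0; exact Heps. }
  assert (Hinv : Un_cv (fun n => / INR n) 0).
  { apply cv_infty_cv_0; intros M.
    destruct (INR_unbounded M) as [N HN]; exists N; intros n Hn.
    pose proof (le_INR N n ltac:(lia)); lra. }
  replace 0 with (c * 0) by ring.
  exact (CV_mult _ _ c 0 Hconst Hinv).
Qed.

Lemma Rdiv_le_compat_INR (a b : R) (n : nat) : a <= b -> a / INR n <= b / INR n.
Proof.
  intros ab; destruct n as [|n].
  - simpl; rewrite !Rdiv_0_r; lra.
  - apply Rmult_le_compat_r; [left; apply Rinv_0_lt_compat, lt_0_INR; lia | exact ab].
Qed.

Lemma has_density_0_sub_eventually (A B : nat -> Prop) (N : nat) :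
  (forall k, (N < k)%nat -> A k -> B k) -> has_density B 0 -> has_density A 0.
Proof.
  intros AB HB; unfold has_density.
  apply (Un_cv_squeeze_0 _ (fun n => count_upto B n / INR n + INR N / INR n)).
  - intros n; split.
    + replace 0 with (0 / INR n) by (unfold Rdiv; ring).
      apply Rdiv_le_compat_INR, count_upto_nonneg.
    + unfold Rdiv; rewrite <- Rmult_plus_distr_r; apply Rdiv_le_compat_INR.
      pose proof (count_upto_le_eventually A B N AB n).
      pose proof (le_INR (Nat.min n N) N (Nat.le_min_r n N)); lra.
  - replace 0 with (0 + 0) by ring.
    exact (CV_plus _ _ 0 0 HB (Un_cv_const_div_INR (INR N))).
Qed.

Lemma r_stat_conv_transfer {X : Type} (S : X -> X -> X -> R) (r : R)
  (xi eta : nat -> X) (x : X) :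
  is_Smetric S -> Un_cv (fun n => S (xi n) (xi n) (eta n)) 0 ->
  r_stat_conv S r xi x -> r_stat_conv S r eta x.
Proof.
  intros HS Hclose Hxi eps Heps.
  destruct (Hclose (eps / 4)) as [N HN]; [lra|].
  apply (has_density_0_sub_eventually _ _ N) with (2 := Hxi (eps / 2) ltac:(lra)).
  intros k Hk Heta.
  specialize (HN k ltac:(lia)); unfold R_dist in HN.
  rewrite Rminus_0_r, Rabs_pos_eq in HN by apply (proj1 HS).
  pose proof (Smetric_triangle S HS (eta k) (xi k) x) as Htri.
  rewrite (Smetric_sym S HS (eta k) (xi k)) in Htri; lra.
Qed.

Theorem theorem4p8 (X : Type) (S : X -> X -> X -> R) (r : R)
  (xi eta : nat -> X) (x : X) :
  is_Smetric S -> 0 <= r ->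
  Un_cv (fun n => S (xi n) (xi n) (eta n)) 0 ->
  (r_stat_conv S r xi x <-> r_stat_conv S r eta x).
Proof.
  intros HS _ Hclose.
  assert (Hclose' : Un_cv (fun n => S (eta n) (eta n) (xi n)) 0).
  { apply (Un_cv_ext (fun n => S (xi n) (xi n) (eta n))); [|exact Hclose].
    intros n; apply (Smetric_sym S HS). }
  split; apply r_stat_conv_transfer; assumption.
Qed.
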